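(* Let $\mathcal{C}$ be a binary $[n,n/2]$ even formally self-dual code, and let $f_{\mathcal{C}}(t)=W_{\mathcal{C}}(\sqrt{1+t},\sqrt{1-t})$ for $0<t<1$. Then $$f_{\mathcal{C}}(t)=2^{n/2}\sum_{r=0}^{\lfloor n/8\rfloor}a_r\,(t^4-t^2+1)^r,$$ where $a_r\in\mathbb{Q}$ and $\sum_{r=0}^{\lfloor n/8\rfloor}a_r=1$.
   Context: For a binary linear code $\mathcal{C}\subseteq\mathbb{F}_2^n$, $W_{\mathcal{C}}(x,y)=\sum_{w=0}^n A_w x^{n-w}y^w$ with $A_w$ the number of codewords of Hamming weight $w$. $\mathcal{C}$ is formally self-dual if $W_{\mathcal{C}}=W_{\mathcal{C}^\perp}$, and even if all codewords have even Hamming weight. *)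

From HB Require Import structures.
From mathcomp Require Import all_boot all_order all_algebra.
From mathcomp Require Import reals.
Set Implicit Arguments. Unset Strict Implicit. Unset Printing Implicit Defensive.
Import Order.TTheory GRing.Theory Num.Theory.

Definition hwt n (v : 'rV['F_2]_n) : nat := #|[set i | v ord0 i != 0%R]|.

Definition in_dual n (C : {vspace 'rV['F_2]_n}) (v : 'rV['F_2]_n) : bool :=
  [forall c : 'rV['F_2]_n, (c \in C) ==> (((v *m c^T)%R) ord0 ord0 == 0%R)].

Definition wdist n (C : {vspace 'rV['F_2]_n}) (w : nat) : nat :=
  #|[set c : 'rV['F_2]_n | (c \in C) && (hwt c == w)]|.
Definition wdist_dual n (C : {vspace 'rV['F_2]_n}) (w : nat) : nat :=
  #|[set v : 'rV['F_2]_n | in_dual C v && (hwt v == w)]|.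

Definition wenum (R : comRingType) n (C : {vspace 'rV['F_2]_n}) (x y : R) : R :=
  (\sum_(w < n.+1) (wdist C w)%:R * x ^+ (n - w) * y ^+ w)%R.

(* Formally self-dual: W_C = W_{C^perp} as polynomials, i.e. equal coefficients *)
Definition formally_self_dual n (C : {vspace 'rV['F_2]_n}) : Prop :=
  forall w, wdist C w = wdist_dual C w.

Definition even_code n (C : {vspace 'rV['F_2]_n}) : Prop :=
  forall c, c \in C -> ~~ odd (hwt c).

From HB Require Import structures.
From mathcomp Require Import all_boot all_order all_algebra finfield.
From mathcomp Require Import reals Rstruct ring lra zify.
Import Order.TTheory GRing.Theory Num.Theory.
Local Open Scope ring_scope.
Set Implicit Arguments. Unset Strict Implicit. Unset Printing Implicit Defensive.

(* For an even code, W_C(x, y) = g(x^2, y^2) with g := even_wenum C, so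
   f_C(t) = g(1 + t, 1 - t) is a polynomial of degree at most n/2. For a formally
   self-dual [n, n/2] code, MacWilliams reads 2^(n/2) W_C(x, y) = W_C(x + y, x - y);
   at x = sqrt(1 + t), y = sqrt(1 - t), homogeneity of g turns this into
   f_C(t) = f_C(sqrt(1 - t^2)). Hence f_C is even, f_C(t) = h(t^2), and h(s) = h(1 - s),
   so h is a polynomial in s^2 - s and f_C = K(t^4 - t^2 + 1) with deg K <= n/8.
   At t = 0 we get K(1) = f_C(0) = |C| = 2^(n/2), i.e. the a_r sum to 1.
   The polynomial identities hold over Q because they hold at every real of (0, 1). *)

Lemma F2_cases (b : 'F_2) : b = 0 \/ b = 1.
Proof. by case: b => [[|[|//]] ?]; [left | right]; apply: val_inj. Qed.

Lemma big_F2 (V : nmodType) (F : 'F_2 -> V) : \sum_(b : 'F_2) F b = F 0 + F 1.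
Proof.
rewrite (bigD1 0) //= (bigD1 1) //= big1 ?addr0 // => b /andP[b1 b0].
by case: (F2_cases b) b1 b0 => ->; rewrite eqxx.
Qed.

Lemma hwt_leq n (v : 'rV['F_2]_n) : (hwt v <= n)%N.
Proof. by rewrite /hwt (leq_trans (max_card _)) // card_ord. Qed.

Definition wenum_pred (R : comNzRingType) n (P : pred 'rV['F_2]_n) (x y : R) : R :=
  \sum_(c | P c) x ^+ (n - hwt c) * y ^+ hwt c.

Lemma sum_card_hwt (R : nzSemiRingType) n (P : pred 'rV['F_2]_n) (F : nat -> R) :
  \sum_(w < n.+1) #|[set c | P c && (hwt c == w)]|%:R * F w =
  \sum_(c | P c) F (hwt c).
Proof.
rewrite (partition_big (fun c => inord (hwt c) : 'I_n.+1) xpredT) //=.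
apply: eq_bigr => w _; rewrite mulr_natl cardsE -sumr_const.
apply: eq_big => [c | c /andP[_ /eqP->]] //.
by rewrite -val_eqE /= inordK // ltnS hwt_leq.
Qed.

Lemma wenum_predE (R : comNzRingType) n (C : {vspace 'rV['F_2]_n}) (x y : R) :
  wenum C x y = wenum_pred (mem C) x y.
Proof.
rewrite /wenum /wenum_pred -(sum_card_hwt (mem C) (fun w => x ^+ (n - w) * y ^+ w)).
by apply: eq_bigr => w _; rewrite mulrA.
Qed.

Lemma wenum_fsdE (R : comNzRingType) n (C : {vspace 'rV['F_2]_n}) (x y : R) :
  formally_self_dual C -> wenum C x y = wenum_pred (in_dual C) x y.
Proof.
move=> fsdC; rewrite /wenum /wenum_pred.
rewrite -(sum_card_hwt (in_dual C) (fun w => x ^+ (n - w) * y ^+ w)).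
by apply: eq_bigr => w _; rewrite mulrA fsdC.
Qed.

Section MacWilliams.

Variables (R : numDomainType) (n : nat).
Implicit Types (v c : 'rV['F_2]_n) (x y : R).

Definition sgnF2 (b : 'F_2) : R := if b == 0 then 1 else -1.

Lemma sgnF2D a b : sgnF2 (a + b) = sgnF2 a * sgnF2 b.
Proof.
by case: (F2_cases a) => ->; case: (F2_cases b) => ->;
  rewrite /sgnF2 /= ?mulr1 ?mul1r ?mulrNN ?mulr1.
Qed.

Definition dotF2 v c : 'F_2 := (v *m c^T) ord0 ord0.

Lemma sgnF2_dot v c : sgnF2 (dotF2 v c) = \prod_i sgnF2 (v ord0 i * c ord0 i).
Proof.
rewrite /dotF2 mxE (big_morph sgnF2 sgnF2D (id1 := 1)) //.
by apply: eq_bigr => i _; rewrite mxE.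
Qed.

(* Character orthogonality: away from the dual, translating by a codeword [c0]
   with [dotF2 v c0 = 1] negates the sum. *)
Lemma sum_sgnF2_dot (C : {vspace 'rV['F_2]_n}) v :
  \sum_(c in C) sgnF2 (dotF2 v c) = if in_dual C v then #|C|%:R else 0.
Proof.
case: ifP => [/forallP dualv | /negbT/forallPn[c0]].
  rewrite -sumr_const; apply: eq_bigr => c cC.
  by move: (dualv c); rewrite cC /= => /eqP; rewrite /sgnF2 /dotF2 => ->.
rewrite negb_imply => /andP[c0C /negbTE dotc0].
set S := (X in X = _); have /eqP : S = - S.
  rewrite {1}/S (reindex_inj (addIr c0)) /= -sumrN.
  apply: eq_big => [c | c _]; first by rewrite rpredDr.
  by rewrite /dotF2 linearD /= mulmxDr mxE sgnF2D /sgnF2 dotc0 mulrN1.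
by rewrite -subr_eq0 opprK -mulr2n mulrn_eq0 => /eqP.
Qed.

Lemma prod_if_card (a : pred 'I_n) x y :
  \prod_i (if a i then y else x) = x ^+ (n - #|a|) * y ^+ #|a|.
Proof.
rewrite mulrC (bigID a) /= (eq_bigr (fun _ => y)) => [|i ->] //.
rewrite [X in _ * X](eq_bigr (fun _ => x)) => [|i /negbTE ->] //.
rewrite !prodr_const; congr (_ * _ ^+ _).
by rewrite -[n in (n - _)%N]card_ord -(cardC a) addKn; apply: eq_card.
Qed.

Lemma hwt_monomialE v x y :
  x ^+ (n - hwt v) * y ^+ hwt v = \prod_i (if v ord0 i != 0 then y else x).
Proof. by rewrite prod_if_card /hwt cardsE. Qed.

(* The Hadamard transform of a monomial factors over the coordinates. *)
Lemma sum_sgnF2_dot_monomial c x y :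
  \sum_v sgnF2 (dotF2 v c) * (x ^+ (n - hwt v) * y ^+ hwt v) =
  (x + y) ^+ (n - hwt c) * (x - y) ^+ hwt c.
Proof.
under eq_bigr do rewrite hwt_monomialE sgnF2_dot -big_split /=.
rewrite (reindex (fun f : {ffun 'I_n -> 'F_2} => \row_i f i)) /=; last first.
  exists (fun v : 'rV_n => [ffun i => v ord0 i]) => [f _ | v _].
    by apply/ffunP => i; rewrite ffunE mxE.
  by apply/rowP => i; rewrite mxE ffunE.
under eq_bigr do under eq_bigr do rewrite mxE.
rewrite -(bigA_distr_bigA (fun i b => sgnF2 (b * c ord0 i) * (if b != 0 then y else x))).
rewrite hwt_monomialE; apply: eq_bigr => i _; rewrite big_F2 mul0r mul1r /=.
by case: (F2_cases (c ord0 i)) => ->; rewrite /sgnF2 /= ?mul1r ?mulN1r.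
Qed.

Lemma macwilliams (C : {vspace 'rV['F_2]_n}) x y :
  #|C|%:R * wenum_pred (in_dual C) x y = wenum_pred (mem C) (x + y) (x - y).
Proof.
rewrite /wenum_pred mulr_sumr big_mkcond /=.
rewrite (eq_bigr (fun v =>
  \sum_(c in C) sgnF2 (dotF2 v c) * (x ^+ (n - hwt v) * y ^+ hwt v))).
  by rewrite exchange_big; apply: eq_bigr => c _; apply: sum_sgnF2_dot_monomial.
by move=> v _; rewrite -mulr_suml sum_sgnF2_dot; case: ifP => // _; rewrite mul0r.
Qed.

End MacWilliams.

Lemma half_subnK n h : ~~ odd h -> (h <= n)%N -> ((n - h)./2 + h./2 = n./2)%N.
Proof. by move=> /negbTE h_even hn; rewrite -[in RHS](subnK hn) halfD h_even andbF. Qed.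

Definition even_wenum (R : comNzRingType) n (C : {vspace 'rV['F_2]_n}) (a b : R) : R :=
  \sum_(c in C) a ^+ (n - hwt c)./2 * b ^+ (hwt c)./2.

Lemma even_wenum_rmorph (R S : comNzRingType) (f : {rmorphism R -> S}) n
    (C : {vspace 'rV['F_2]_n}) (a b : R) :
  f (even_wenum C a b) = even_wenum C (f a) (f b).
Proof. by rewrite rmorph_sum; apply: eq_bigr => c _; rewrite rmorphM !rmorphXn. Qed.

Lemma even_wenum11 (R : comNzRingType) n (C : {vspace 'rV['F_2]_n}) :
  even_wenum C (1 : R) 1 = #|C|%:R.
Proof. by rewrite -sumr_const; apply: eq_bigr => c _; rewrite !expr1n mulr1. Qed.

Lemma pow2_neq0 (R : numDomainType) m : (2 : R) ^+ m != 0.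
Proof. by rewrite expf_neq0 // pnatr_eq0. Qed.

Lemma comp_polyXN_even (R : numDomainType) (p : {poly R}) :
  p \Po - 'X = p -> p = even_poly p \Po 'X^2.
Proof.
move=> p_even; have pE := poly_even_odd p.
set e := even_poly p \Po 'X^2 in pE *; set o := odd_poly p \Po 'X^2 in pE.
have sqr_even (q : {poly R}) : (q \Po 'X^2) \Po - 'X = q \Po 'X^2.
  by rewrite -comp_polyA comp_Xn_poly sqrrN.
have pN : p \Po - 'X = e - o * 'X.
  by rewrite -{1}pE comp_polyD comp_polyM !sqr_even comp_polyX mulrN.
have /eqP : o * 'X * 2%:R = 0.
  by rewrite -[RHS](subrr p) -{1}pE -p_even pN; ring.
rewrite -polyC_natr !mulf_eq0 polyC_eq0 pnatr_eq0 polyX_eq0 !orbF => /eqP o0.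
by rewrite -{1}pE o0 mul0r addr0.
Qed.

Lemma comp_poly1B_sym (R : numFieldType) (p : {poly R}) :
  p \Po (1 - 'X) = p -> exists q, p = q \Po ('X^2 - 'X).
Proof.
move=> p_sym; pose c : {poly R} := (2^-1)%:P.
have cc : c + c = 1.
  by rewrite -polyCD -polyC1 -mulr2n -[_ *+ 2]mulr_natr mulVf ?pnatr_eq0.
pose g := p \Po ('X + c).
have g_even : g \Po - 'X = g.
  rewrite /g -comp_polyA -{1}p_sym -comp_polyA -polyC1; congr (p \Po _).
  rewrite !(comp_polyB, comp_polyD, comp_polyX, comp_polyC) polyC1 -cc.
  ring.
exists (even_poly g \Po ('X + c * c)).
rewrite -[p](comp_polyXaddC_K _ 2^-1) -/c -/g {1}(comp_polyXN_even g_even).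
rewrite -!comp_polyA; congr (_ \Po _).
rewrite comp_Xn_poly !(comp_polyD, comp_polyM, comp_polyX, comp_polyC).
have -> : ('X - c) ^+ 2 = 'X^2 - (c + c) * 'X + c * c by ring.
by rewrite cc mul1r.
Qed.

Lemma comp_poly_quartic (R : numFieldType) (p : {poly R}) :
  p \Po - 'X = p -> even_poly p \Po (1 - 'X) = even_poly p ->
  exists q, p = q \Po ('X^4 - 'X^2 + 1).
Proof.
move=> /comp_polyXN_even pE /comp_poly1B_sym[q qE].
exists (q \Po ('X - 1)); rewrite pE qE -!comp_polyA -polyC1; congr (q \Po _).
rewrite !(comp_polyB, comp_polyD, comp_polyX, comp_Xn_poly, comp_polyC).
by rewrite -exprM; ring.
Qed.

Lemma poly_eq0_on_unit_interval (R : numFieldType) (p : {poly R}) :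
  (forall t, 0 < t < 1 -> p.[t] = 0) -> p = 0.
Proof.
move=> p0; apply/eqP/negPn/negP => p_neq0.
pose rs := [seq (k.+2%:R : R)^-1 | k <- iota 0 (size p)].
have /negP[] : ~~ (size rs < size p)%N by rewrite size_map size_iota ltnn.
apply: max_poly_roots p_neq0 _ _.
  apply/allP => _ /mapP[k _ ->]; apply/eqP/p0.
  by rewrite invr_gt0 ltr0n invf_lt1 ?ltr0n // ltr1n.
by rewrite map_inj_uniq ?iota_uniq // => i j /invr_inj/eqP; rewrite eqr_nat => /eqP[].
Qed.

Section RatPolyEval.

Variable R : numFieldType.
Implicit Types (t : R) (p q : {poly rat}).

Definition ratev (t : R) : {rmorphism {poly rat} -> R} :=
  horner_morph (fun a => mulrC t (ratr a)).

Lemma ratevX t : ratev t 'X = t.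
Proof. exact: horner_morphX. Qed.

Lemma ratev_comp t p q : ratev t (p \Po q) = ratev (ratev t q) p.
Proof. by rewrite /ratev /= /horner_morph map_comp_poly horner_comp. Qed.

Lemma ratev_coef_wide t N p : (size p <= N)%N ->
  ratev t p = \sum_(r < N) ratr p`_r * t ^+ r.
Proof.
move=> sp; rewrite /ratev /= /horner_morph.
rewrite (horner_coef_wide _ (n := N)) ?size_map_poly //.
by apply: eq_bigr => r _; rewrite coef_map.
Qed.

Lemma ratev_eq_poly p q :
  (forall t, 0 < t < 1 -> ratev t p = ratev t q) -> p = q.
Proof.
move=> pq; apply: (map_poly_inj (ratr : {rmorphism rat -> R})); apply/eqP.
rewrite -subr_eq0 -rmorphB; apply/eqP/poly_eq0_on_unit_interval => t t01.
by rewrite rmorphB hornerD hornerN; apply/eqP; rewrite subr_eq0; apply/eqP/pq.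
Qed.

End RatPolyEval.

Definition wenum_poly n (C : {vspace 'rV['F_2]_n}) : {poly rat} :=
  even_wenum C (1 + 'X) (1 - 'X).

Lemma ratev_wenum_poly (R : numFieldType) (t : R) n (C : {vspace 'rV['F_2]_n}) :
  ratev t (wenum_poly C) = even_wenum C (1 + t) (1 - t).
Proof. by rewrite /wenum_poly even_wenum_rmorph rmorphD rmorphB rmorph1 ratevX. Qed.

Section EvenFormallySelfDual.

Variables (n : nat) (C : {vspace 'rV['F_2]_n}).
Hypotheses (n_even : ~~ odd n) (evenC : even_code C).
Hypotheses (dimC : \dim C = n./2) (fsdC : formally_self_dual C).

Lemma card_half_dim : #|C| = (2 ^ n./2)%N.
Proof. by rewrite card_vspace card_Fp // dimC. Qed.

Lemma wenum_pred_sqr (R : comNzRingType) (x y : R) :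
  wenum_pred (mem C) x y = even_wenum C (x ^+ 2) (y ^+ 2).
Proof.
apply: eq_bigr => c cC; rewrite -!exprM !mul2n !even_halfK ?evenC //.
by rewrite oddB ?hwt_leq // (negbTE n_even) (negbTE (evenC cC)).
Qed.

Lemma even_wenumZ (R : comNzRingType) (l a b : R) :
  even_wenum C (l * a) (l * b) = l ^+ n./2 * even_wenum C a b.
Proof.
rewrite mulr_sumr; apply: eq_bigr => c cC.
by rewrite !exprMn mulrACA -exprD half_subnK ?evenC ?hwt_leq.
Qed.

Lemma macwilliams_fsd (R : numDomainType) (x y : R) :
  2 ^+ n./2 * wenum C x y = wenum_pred (mem C) (x + y) (x - y).
Proof. by rewrite (wenum_fsdE _ _ fsdC) -macwilliams card_half_dim natrX. Qed.

(* MacWilliams for [x = sqrt (1 + t)], [y = sqrt (1 - t)]: then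
   [(x + y)^2 = 2 (1 + s)] and [(x - y)^2 = 2 (1 - s)] with [s = x y]. *)
Lemma even_wenum_sqrt1B (R : rcfType) (t : R) : -1 <= t <= 1 ->
  even_wenum C (1 + t) (1 - t) =
  even_wenum C (1 + Num.sqrt (1 - t ^+ 2)) (1 - Num.sqrt (1 - t ^+ 2)).
Proof.
case/andP=> t_ge t_le.
have /sqr_sqrtr x2 : 0 <= 1 + t by lra.
have /sqr_sqrtr y2 : 0 <= 1 - t by lra.
have xy : Num.sqrt (1 - t ^+ 2) = Num.sqrt (1 + t) * Num.sqrt (1 - t).
  by rewrite -sqrtrM; [congr Num.sqrt; ring | lra].
apply: (mulfI (pow2_neq0 _ n./2)); rewrite -{1}x2 -{1}y2 -wenum_pred_sqr -wenum_predE.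
rewrite macwilliams_fsd wenum_pred_sqr xy -even_wenumZ.
by congr even_wenum; rewrite sqrrD ?sqrrN x2 y2; ring.
Qed.

Lemma wenum_poly0 : (wenum_poly C).[0] = 2 ^+ n./2.
Proof.
rewrite -horner_evalE even_wenum_rmorph rmorphD rmorphB rmorph1 /= horner_evalE.
by rewrite hornerX subr0 ?addr0 even_wenum11 card_half_dim natrX.
Qed.

Lemma size_wenum_poly : (size (wenum_poly C) <= n./2.+1)%N.
Proof.
have size1DX : size (1 + 'X : {poly rat}) = 2%N by rewrite addrC -polyC1 size_XaddC.
have size1BX : size (1 - 'X : {poly rat}) = 2%N.
  by rewrite -opprB size_polyN -polyC1 size_XsubC.
rewrite (leq_trans (size_sum _ _ _)) //; apply/bigmax_leqP => c cC.
rewrite (leq_trans (size_polyMleq _ _)) // -(half_subnK (evenC cC) (hwt_leq c)).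
have := size_poly_exp_leq (1 + 'X : {poly rat}) (n - hwt c)./2.
have := size_poly_exp_leq (1 - 'X : {poly rat}) (hwt c)./2.
rewrite size1DX size1BX !mul1n; move: (size _) (size _) => sb sa; lia.
Qed.

Lemma wenum_poly_even : wenum_poly C \Po - 'X = wenum_poly C.
Proof.
apply: (ratev_eq_poly (R := Rdefinitions.R)) => t /andP[t_gt0 t_lt1].
rewrite ratev_comp rmorphN ratevX !ratev_wenum_poly.
have t_in : -1 <= t <= 1 by apply/andP; split; lra.
have Nt_in : -1 <= - t <= 1 by apply/andP; split; lra.
by rewrite (even_wenum_sqrt1B Nt_in) sqrrN [RHS](even_wenum_sqrt1B t_in).
Qed.

Lemma wenum_poly_even_part_sym :
  even_poly (wenum_poly C) \Po (1 - 'X) = even_poly (wenum_poly C).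
Proof.
have ratev_sqrt (w : Rdefinitions.R) : 0 <= w ->
    ratev w (even_poly (wenum_poly C)) =
    even_wenum C (1 + Num.sqrt w) (1 - Num.sqrt w).
  move=> w_ge0; rewrite -ratev_wenum_poly {2}(comp_polyXN_even wenum_poly_even).
  by rewrite ratev_comp rmorphXn ratevX sqr_sqrtr.
apply: (ratev_eq_poly (R := Rdefinitions.R)) => v /andP[v_gt0 v_lt1].
rewrite ratev_comp rmorphB rmorph1 ratevX !ratev_sqrt; try lra.
have /sqr_sqrtr sqrt_v2 : 0 <= v by lra.
have sqrt_v_ge0 := sqrtr_ge0 v.
have sqrt_v_in : -1 <= Num.sqrt v <= 1 by apply/andP; split; nra.
by rewrite [RHS](even_wenum_sqrt1B sqrt_v_in) sqrt_v2.
Qed.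

Lemma wenum_poly_quartic : exists2 K : {poly rat},
  wenum_poly C = K \Po ('X^4 - 'X^2 + 1) & (size K <= (n %/ 8).+1)%N.
Proof.
have [K FK] := comp_poly_quartic wenum_poly_even wenum_poly_even_part_sym.
exists K => //; have size_quartic : size ('X^4 - 'X^2 + 1 : {poly rat}) = 5%N.
  rewrite -addrA size_polyDl ?size_polyXn //.
  by rewrite size_polyDl ?size_polyN ?size_polyXn ?size_poly1.
have := size_comp_poly K ('X^4 - 'X^2 + 1); rewrite -FK size_quartic.
have := size_wenum_poly; have := even_halfK n_even.
move: (size K) (size (wenum_poly C)) n./2 => k f m; lia.
Qed.

End EvenFormallySelfDual.

Theorem lemma5 (R : realType) (n : nat) (C : {vspace 'rV['F_2]_n}) :
  ~~ odd n -> \dim C = n./2 -> even_code C -> formally_self_dual C ->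
  exists a : 'I_(n %/ 8).+1 -> rat,
    \sum_(r < (n %/ 8).+1) a r = 1 /\
    forall t : R, 0 < t < 1 ->
      wenum C (Num.sqrt (1 + t)) (Num.sqrt (1 - t)) =
      2 ^+ (n./2) * \sum_(r < (n %/ 8).+1) ratr (a r) * (t ^+ 4 - t ^+ 2 + 1) ^+ r.
Proof.
move=> n_even dimC evenC fsdC.
have [K FK sizeK] := wenum_poly_quartic n_even evenC dimC fsdC.
exists (fun r => K`_r / 2 ^+ n./2); split.
  have sum_coefK : \sum_(r < (n %/ 8).+1) K`_r = K.[1].
    by rewrite (horner_coef_wide 1 sizeK); apply: eq_bigr => r _; rewrite expr1n mulr1.
  have K1 : K.[1] = 2 ^+ n./2.
    by rewrite -(wenum_poly0 dimC) FK horner_comp !hornerE.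
  by rewrite -mulr_suml sum_coefK K1 divff ?pow2_neq0.
move=> t /andP[t_gt0 t_lt1].
rewrite wenum_predE wenum_pred_sqr // !sqr_sqrtr ?subr_ge0 ?addr_ge0 ?ltW //.
rewrite -ratev_wenum_poly FK ratev_comp (ratev_coef_wide _ sizeK) mulr_sumr.
apply: eq_bigr => r _; rewrite rmorphD rmorphB rmorph1 !rmorphXn ratevX.
by rewrite fmorph_div rmorphXn rmorph_nat mulrA mulrCA divff ?pow2_neq0 ?mulr1.
Qed.
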